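(* Let $a,b\in\mathbb{Q}_3$ with $\gamma(a)=0$, $\gamma(b)=m>0$ and $a_0=2$. Then $x=\sum_{k\ge0}x_k3^k\in\mathbb{Z}_3^*$ is a solution of $x^3+ax=b$ if and only if the congruences $$x_0^3+a_0x_0\equiv0\pmod 3,$$ $$x_1a_0+x_0a_1+N_1(x_0)+M_1(x_0)\equiv 0\pmod 3,$$ $$x_ka_0+\dots+x_0a_k+x_0^2x_{k-1}+N_k(x_0,\dots,x_{k-1})+M_k(x_0,\dots,x_{k-1})\equiv0\pmod 3,\quad 2\le k\le m-1,$$ $$x_ka_0+\dots+x_0a_k+x_0^2x_{k-1}+N_k(x_0,\dots,x_{k-1})+M_k(x_0,\dots,x_{k-1})\equiv b_{k-m}\pmod 3,\quad k\ge m,$$ are fulfilled, where the integers $M_k(x_0,\dots,x_{k-1})$ are defined successively by $$x_0^3+2x_0=3M_1(x_0),$$ $$x_1a_0+x_0a_1+N_1(x_0)=-M_1(x_0)+3M_2(x_0,x_1),$$ $$x_ka_0+x_{k-1}a_1+\dots+x_0a_k+x_0^2x_{k-1}+N_k(x_0,\dots,x_{k-1})=-M_k(x_0,\dots,x_{k-1})+3M_{k+1}(x_0,\dots,x_k),\quad 2\le k\le m-1,$$ $$x_ka_0+x_{k-1}a_1+\dots+x_0a_k+x_0^2x_{k-1}+N_k(x_0,\dots,x_{k-1})=b_{k-m}-M_k(x_0,\dots,x_{k-1})+3M_{k+1}(x_0,\dots,x_k),\quad k\ge m.$$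
   Context: Write $a=3^{\gamma(a)}(a_0+a_13+a_23^2+\dots)$, $b=3^{\gamma(b)}(b_0+b_13+b_23^2+\dots)$ in canonical form, with digits $a_j,b_j\in\{0,1,2\}$, $a_0,b_0\ne0$, $\gamma(a),\gamma(b)\in\mathbb{Z}$. $\mathbb{Z}_3^*$ is the set of $3$-adic units; $x\in\mathbb{Z}_3^*$ is written $x=x_0+x_13+x_23^2+\dots$ with $x_j\in\{0,1,2\}$, $x_0\ne0$. For $k\ge1$, $N_k(x_0,\dots,x_{k-1})=\sum \frac{3!}{m_0!\cdots m_{k-1}!}x_0^{m_0}\cdots x_{k-1}^{m_{k-1}}$, the sum over nonnegative integers $m_0,\dots,m_{k-1}$ with $\sum_{i=0}^{k-1}m_i=3$ and $\sum_{i=1}^{k-1}im_i=k$; in particular $N_1=0$. *)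

(* 3-adic integers are represented by their digit sequences. *)
From mathcomp Require Import all_boot all_order all_algebra.
Set Implicit Arguments. Unset Strict Implicit. Unset Printing Implicit Defensive.
Import Order.TTheory GRing.Theory Num.Theory.
Local Open Scope ring_scope.

Definition digits3 (s : nat -> nat) : Prop := forall j, (s j < 3)%N.

Definition trunc3 (s : nat -> nat) (n : nat) : int :=
  \sum_(k < n) (s k)%:Z * (3%:Z) ^+ k.

(* The 3-adic integer with digits x solves x^3 + a x = b, where a is the unit
   with digits a (gamma(a)=0) and b = 3^m (b_0 + b_1 3 + ...).
   Equality in Z_3 is equality modulo 3^n for every n (Z_3 = lim Z/3^n). *)
Definition is_solution3 (a b : nat -> nat) (m : nat) (x : nat -> nat) : Prop :=
  forall n : nat,
    (3%:Z ^+ n %| trunc3 x n ^+ 3 + trunc3 a n * trunc3 x n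
                  - 3%:Z ^+ m * trunc3 b n)%Z.

(* N_k(x_0,...,x_{k-1}) : multinomial sum over (m_0..m_{k-1}) with
   sum m_i = 3 and sum i m_i = k (each m_i <= 3, so m_i : 'I_4). *)
Definition Nk (x : nat -> nat) (k : nat) : int :=
  \sum_(mm : {ffun 'I_k -> 'I_4} |
          ((\sum_(i < k) (mm i : nat))%N == 3%N)
          && ((\sum_(i < k) (i : nat) * (mm i : nat))%N == k))
     ((3`! %/ \prod_(i < k) (mm i : nat)`!)%N%:Z
       * \prod_(i < k) ((x i)%:Z ^+ (mm i : nat))).

Definition conv3 (a x : nat -> nat) (k : nat) : int :=
  \sum_(i < k.+1) (a i)%:Z * (x (k - i)%N)%:Z.

(* left-hand side (without M_k) of the k-th congruence *)
Definition Lk (a x : nat -> nat) (k : nat) : int :=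
  match k with
  | 0 => (x 0%N)%:Z ^+ 3 + conv3 a x 0
  | k'.+1 => conv3 a x k + (if (2 <= k)%N then (x 0%N)%:Z ^+ 2 * (x k')%:Z else 0)
             + Nk x k
  end.

Definition ck (b : nat -> nat) (m k : nat) : int :=
  if (k < m)%N then 0 else (b (k - m)%N)%:Z.

Fixpoint Mk (a b x : nat -> nat) (m k : nat) : int :=
  match k with
  | 0 => 0
  | k'.+1 => ((Lk a x k' + Mk a b x m k' - ck b m k') %/ 3)%Z
  end.

From mathcomp Require Import all_boot all_order all_algebra zify ring.
Set Implicit Arguments. Unset Strict Implicit. Unset Printing Implicit Defensive.
Import Order.TTheory GRing.Theory Num.Theory.
Local Open Scope ring_scope.

(* Let X_n, A_n, B_n be the polynomials whose coefficients are the first n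
   digits of x, a, b, so that trunc3 is evaluation at 3.  For k < n the k-th
   coefficient of X_n^3 + A_n X_n - 'X^m B_n is L_k - c_k, except that the
   term 3 x_0^2 x_k of the cube is counted by L as x_0^2 x_k one digit
   higher; evaluated at 3 this shift telescopes to a multiple of 3^n.  The
   carries M_k rewrite sum_(k<n) (L_k - c_k) 3^k as 3^n M_n plus the base-3
   number with digits r_k = (L_k + M_k - c_k) mod 3.  So x^3 + a x = b holds
   modulo 3^n iff r_k = 0 for all k < n.  The multinomial theorem identifies
   N_k with the k-th coefficient of X_k^3. *)

Section FfunSnoc.
Variables (T : finType) (k : nat).

Definition ffun_snoc (g : {ffun 'I_k -> T}) (j : T) : {ffun 'I_k.+1 -> T} :=
  [ffun i => if unlift ord_max i is Some i' then g i' else j].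

Lemma ffun_snoc_max g j : ffun_snoc g j ord_max = j.
Proof. by rewrite ffunE unlift_none. Qed.

Lemma ffun_snoc_widen g j (i : 'I_k) (h : (k <= k.+1)%N) :
  ffun_snoc g j (widen_ord h i) = g i.
Proof.
have -> : widen_ord h i = lift ord_max i by apply/val_inj; exact: (esym (lift_max i)).
by rewrite ffunE liftK.
Qed.

Lemma big_ffun_snoc (R : Type) (idx : R) (op : Monoid.law idx) g j
    (F : nat -> T -> R) :
  \big[op/idx]_(i < k.+1) F i (ffun_snoc g j i)
  = op (\big[op/idx]_(i < k) F i (g i)) (F k j).
Proof.
rewrite big_ord_recr /= ffun_snoc_max; congr (op _ _).
by apply: eq_bigr => i _; rewrite ffun_snoc_widen.
Qed.

Lemma sum_ffun_snoc (R : nmodType) (F : {ffun 'I_k.+1 -> T} -> R) :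
  \sum_(mm : {ffun 'I_k.+1 -> T}) F mm
  = \sum_(j : T) \sum_(g : {ffun 'I_k -> T}) F (ffun_snoc g j).
Proof.
rewrite pair_big /= (reindex (fun p : T * {ffun 'I_k -> T} => ffun_snoc p.2 p.1)) //.
exists (fun mm : {ffun 'I_k.+1 -> T} =>
          (mm ord_max, [ffun i => mm (widen_ord (leqnSn k) i)])).
  move=> [j g] _ /=; rewrite ffun_snoc_max; congr pair.
  by apply/ffunP => i; rewrite ffunE ffun_snoc_widen.
move=> mm _ /=; apply/ffunP => i; rewrite ffunE.
case: unliftP => [i' ->|-> //]; rewrite ffunE; congr (mm _).
by apply/val_inj; rewrite /= /bump leqNgt ltn_ord.
Qed.

End FfunSnoc.

Lemma prod_fact_dvd_fact_sum k (e : 'I_k -> nat) :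
  (\prod_(i < k) (e i)`! %| (\sum_(i < k) e i)`!)%N.
Proof.
elim: k e => [|k IH] e; first by rewrite !big_ord0.
rewrite !big_ord_recr /= -(bin_fact (leq_addl _ (e ord_max))) addnK.
by rewrite dvdn_mull // mulnC dvdn_mul.
Qed.

Lemma divn_fact_mul_bin s j P : (j <= s)%N -> (P %| (s - j)`!)%N ->
  (s`! %/ (P * j`!) = 'C(s, j) * ((s - j)`! %/ P))%N.
Proof.
move=> le_js dvd_P; have P_gt0 : (0 < P)%N := dvdn_gt0 (fact_gt0 _) dvd_P.
rewrite -(bin_fact le_js) -{1}(divnK dvd_P).
rewrite [X in (X %/ _)%N](_ : _ = 'C(s, j) * ((s - j)`! %/ P) * (P * j`!))%N.
  by rewrite mulnK // muln_gt0 P_gt0 fact_gt0.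
ring.
Qed.

Lemma multinomial (R : comPzRingType) (t k s : nat) (c : nat -> R) : (s < t)%N ->
  (\sum_(i < k) c i) ^+ s
  = \sum_(mm : {ffun 'I_k -> 'I_t} | (\sum_(i < k) (mm i : nat))%N == s)
      (\prod_(i < k) c i ^+ mm i) *+ (s`! %/ \prod_(i < k) (mm i)`!).
Proof.
elim: k s => [|k IH] s lt_st.
  rewrite big_ord0; under eq_bigl => mm do rewrite big_ord0.
  under eq_bigr => mm _ do rewrite !big_ord0 divn1.
  case: s {lt_st} => [|s]; last by rewrite exprS mul0r big_pred0.
  by rewrite expr0 sumr_const card_ffun !card_ord.
rewrite big_ord_recr exprDn [RHS]big_mkcond [RHS]sum_ffun_snoc /=.
rewrite (bigID (fun j : 'I_t => (j < s.+1)%N)) /= [X in _ = _ + X]big1 ?addr0; last first.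
  move=> j lt_sj; apply: big1 => g _.
  rewrite (big_ffun_snoc addn g j (fun _ v => v)) ifN //.
  by apply: contraNneq lt_sj => <-; rewrite ltnS leq_addl.
rewrite (big_ord_widen t
          (fun j => ((\sum_(i < k) c i) ^+ (s - j) * c k ^+ j) *+ 'C(s, j))) //.
apply: eq_bigr => j le_js; rewrite IH; last by lia.
rewrite mulr_suml -sumrMnl big_mkcond /=; apply: eq_bigr => g _.
rewrite (big_ffun_snoc addn g j (fun _ v => v)).
have -> : ((\sum_(i < k) g i) + j == s)%N = ((\sum_(i < k) g i) == s - j)%N.
  by apply/eqP/eqP; lia.
case: eqP => // sum_g.
rewrite (big_ffun_snoc muln g j (fun _ v => v`!)).
rewrite (big_ffun_snoc (@GRing.mul R) g j (fun i v => c i ^+ v)).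
rewrite divn_fact_mul_bin //; last by rewrite -sum_g prod_fact_dvd_fact_sum.
by rewrite mulrnAl mulrnA mulrnAC.
Qed.

Lemma prod_scaleXn_exp (R : comNzRingType) k (y : nat -> R) (e : 'I_k -> nat) :
  \prod_(i < k) (y i *: 'X^i) ^+ e i
  = (\prod_(i < k) y i ^+ e i) *: 'X^(\sum_(i < k) i * e i).
Proof.
under eq_bigr => i _ do rewrite exprZn -exprM -mul_polyC.
by rewrite big_split /= -rmorph_prod prodrXr mul_polyC.
Qed.

Lemma coef_exprDXn (R : comNzRingType) (p q : {poly R}) j e k : (k < j)%N ->
  ((p + 'X^j * q) ^+ e)`_k = (p ^+ e)`_k.
Proof.
move=> lt_kj; rewrite -[_ ^+ e](subrK (p ^+ e)) coefD subrXX addrAC subrr add0r.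
by rewrite -!mulrA coefXnM lt_kj add0r.
Qed.

Lemma coef_cubeDXn (R : comNzRingType) (p q : {poly R}) j : (0 < j)%N ->
  ((p + 'X^j * q) ^+ 3)`_j = (p ^+ 3)`_j + 3%:R * p`_0 ^+ 2 * q`_0.
Proof.
move=> j_gt0.
have -> : (p + 'X^j * q) ^+ 3
          = p ^+ 3 + 'X^j * (q * (3%:R * p ^+ 2 + 3%:R * p * ('X^j * q)
                                  + ('X^j * q) ^+ 2)).
  by ring.
rewrite coefD coefXnM ltnn subnn !(coef0M, coefD, coefMn, expr2, coef1) /=.
have -> : 'X^j`_0 = 0 :> R by rewrite coefXn; case: j j_gt0.
ring.
Qed.

Definition digit_poly (s : nat -> nat) (n : nat) : {poly int} := \poly_(i < n) (s i)%:Z.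

Lemma trunc3E s n : trunc3 s n = (digit_poly s n).[3%:Z].
Proof. by rewrite horner_poly. Qed.

Lemma digit_polyS s n : digit_poly s n.+1 = digit_poly s n + 'X^n * (s n)%:Z%:P.
Proof. by rewrite /digit_poly !poly_def big_ord_recr /= mulrC mul_polyC. Qed.

Lemma coef_exp_digit_poly s e n k : (k < n)%N ->
  (digit_poly s n ^+ e)`_k = (digit_poly s k.+1 ^+ e)`_k.
Proof.
elim: n => // n IH; rewrite ltnS leq_eqVlt => /predU1P[-> // | lt_kn].
by rewrite digit_polyS coef_exprDXn // IH.
Qed.

Lemma Nk_coef_cube x k : Nk x k = (digit_poly x k ^+ 3)`_k.
Proof.
rewrite /digit_poly poly_def (@multinomial _ 4 k 3 (fun i => (x i)%:Z *: 'X^i)) //.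
rewrite coef_sum /Nk big_mkcondr /=.
apply: eq_bigr => mm _.
rewrite (@prod_scaleXn_exp _ k (fun i => (x i)%:Z)) coefMn coefZ coefXn eq_sym.
case: eqP; rewrite ?mulr1 ?mulr0 ?mul0rn //.
by move=> _; rewrite -mulr_natl natz.
Qed.

Lemma coef_cube_digit_poly x k :
  (digit_poly x k.+1 ^+ 3)`_k
  = Nk x k + (if k is 0 then (x 0%N)%:Z ^+ 3 else 3 * (x 0%N)%:Z ^+ 2 * (x k)%:Z).
Proof.
rewrite digit_polyS Nk_coef_cube; case: k => [|k].
  rewrite /digit_poly poly_def big_ord0 !add0r mul1r.
  by rewrite -rmorphXn coefC expr0n /= mulr0n coef0 add0r.
by rewrite (coef_cubeDXn _ _ (ltn0Sn k)) coefC coef_poly.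
Qed.

Definition cross_term (x : nat -> nat) (k : nat) : int :=
  if (1 < k)%N then (x 0%N)%:Z ^+ 2 * (x k.-1)%:Z else 0.

Lemma Lk_coef_cube a x k :
  Lk a x k = (digit_poly x k.+1 ^+ 3)`_k + conv3 a x k
             - 3 * cross_term x k.+1 + cross_term x k.
Proof.
rewrite coef_cube_digit_poly /cross_term; case: k => [|k] /=.
  have -> : Nk x 0 = 0.
    by rewrite Nk_coef_cube /digit_poly poly_def big_ord0 expr0n /= mulr0n coef0.
  by rewrite /Lk; ring.
rewrite /Lk; ring.
Qed.

Definition cubic_digit_poly (a b : nat -> nat) (m : nat) (x : nat -> nat) n
    : {poly int} :=
  digit_poly x n ^+ 3 + digit_poly a n * digit_poly x n - 'X^m * digit_poly b n.

Lemma cubic_digit_polyE a b m x n :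
  (cubic_digit_poly a b m x n).[3%:Z]
  = trunc3 x n ^+ 3 + trunc3 a n * trunc3 x n - 3%:Z ^+ m * trunc3 b n.
Proof. by rewrite !hornerE !trunc3E. Qed.

Lemma coef_cubic_digit_poly a b m x n k : (k < n)%N ->
  (cubic_digit_poly a b m x n)`_k
  = Lk a x k - ck b m k + 3 * cross_term x k.+1 - cross_term x k.
Proof.
move=> lt_kn; rewrite Lk_coef_cube coefB coefD coef_exp_digit_poly // coefXnM.
have -> : (digit_poly a n * digit_poly x n)`_k = conv3 a x k.
  rewrite coefM; apply: eq_bigr => i _; rewrite !coef_poly.
  by have lt_ik := ltn_ord i; rewrite !ifT //; lia.
have -> : (if (k < m)%N then 0 else (digit_poly b n)`_(k - m)%N) = ck b m k.
  by rewrite /ck coef_poly; case: ifP => // _; rewrite ifT //; lia.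
ring.
Qed.

Lemma telescope_sum_exp (R : comPzRingType) (d : R) (f : nat -> R) n :
  \sum_(k < n) (d * f k.+1 - f k) * d ^+ k = d ^+ n * f n - f 0%N.
Proof.
rewrite (eq_bigr (fun k : 'I_n => d ^+ k.+1 * f k.+1 - d ^+ k * f k)).
  by rewrite -(big_mkord xpredT (fun k => d ^+ k.+1 * f k.+1 - d ^+ k * f k))
     telescope_sumr // expr0 mul1r.
by move=> k _; rewrite exprS; ring.
Qed.

Lemma dvdz_horner_sub_trunc (Q : {poly int}) (d : int) n :
  (d ^+ n %| Q.[d] - \sum_(k < n) Q`_k * d ^+ k)%Z.
Proof.
rewrite -{1}(poly_take_drop n Q) hornerD hornerM hornerXn horner_poly.
by rewrite addrAC subrr add0r dvdz_mull.
Qed.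

Lemma sum_carry (d : int) (D M : nat -> int) n :
  M 0%N = 0 -> (forall k, M k.+1 = ((D k + M k) %/ d)%Z) ->
  \sum_(k < n) D k * d ^+ k
  = d ^+ n * M n + \sum_(k < n) ((D k + M k) %% d)%Z * d ^+ k.
Proof.
move=> M0 MS; elim: n => [|n IH]; first by rewrite !big_ord0 M0 mulr0 addr0.
rewrite !big_ord_recr /= IH MS.
set q := ((D n + M n) %/ d)%Z; set r := ((D n + M n) %% d)%Z.
have -> : D n = q * d + r - M n by rewrite /q /r -divz_eq addrK.
rewrite exprSr; ring.
Qed.

Lemma dvdz_digit_sum_eq0 (d : int) (r : nat -> int) : (forall k, 0 <= r k < d) ->
  (forall n, (d ^+ n %| \sum_(k < n) r k * d ^+ k)%Z) <-> (forall k, r k = 0).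
Proof.
move=> r_digit; split=> [dvd_sum | r0 n]; last first.
  by rewrite big1 ?dvdz0 // => k _; rewrite r0 mul0r.
have d_neq0 : d != 0 by case/andP: (r_digit 0%N) => /le_lt_trans lt_r0 /lt_r0/gt_eqF->.
elim/ltn_ind=> k IH; have := dvd_sum k.+1.
rewrite big_ord_recr /= big1 => [|j _]; last by rewrite IH ?mul0r.
rewrite add0r exprS dvdz_mul2r ?expf_neq0 // => /dvdz_mod0P.
by rewrite modz_small ?r_digit.
Qed.

Definition residue3 a b x m k : int :=
  ((Lk a x k - ck b m k + Mk a b x m k) %% 3%:Z)%Z.

Lemma sum_coef_cubic_digit_poly a b m x n :
  \sum_(k < n) (cubic_digit_poly a b m x n)`_k * 3%:Z ^+ k
  = 3%:Z ^+ n * (Mk a b x m n + cross_term x n)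
    + \sum_(k < n) residue3 a b x m k * 3%:Z ^+ k.
Proof.
rewrite (eq_bigr (fun k : 'I_n => (Lk a x k - ck b m k) * 3%:Z ^+ k
           + (3%:Z * cross_term x k.+1 - cross_term x k) * 3%:Z ^+ k)); last first.
  by move=> k _; rewrite coef_cubic_digit_poly //; ring.
rewrite big_split /= telescope_sum_exp.
rewrite (@sum_carry _ (fun k => Lk a x k - ck b m k) (Mk a b x m)) // => [|k].
  by rewrite /cross_term /=; ring.
by rewrite /= addrAC.
Qed.

Lemma dvdz_cubic_residue3 a b m x n :
  (3%:Z ^+ n %| trunc3 x n ^+ 3 + trunc3 a n * trunc3 x n - 3%:Z ^+ m * trunc3 b n)%Z
  = (3%:Z ^+ n %| \sum_(k < n) residue3 a b x m k * 3%:Z ^+ k)%Z.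
Proof.
rewrite -cubic_digit_polyE; set Q := cubic_digit_poly a b m x n.
have -> : Q.[3%:Z] = (Q.[3%:Z] - \sum_(k < n) Q`_k * 3%:Z ^+ k)
                     + 3%:Z ^+ n * (Mk a b x m n + cross_term x n)
                     + \sum_(k < n) residue3 a b x m k * 3%:Z ^+ k.
  by rewrite -addrA -sum_coef_cubic_digit_poly subrK.
by rewrite rpredDl // rpredD ?dvdz_horner_sub_trunc ?dvdz_mulr.
Qed.

Lemma residue3_eq0 a b x m k :
  (residue3 a b x m k = 0) <-> (Lk a x k + Mk a b x m k = ck b m k %[mod 3])%Z.
Proof.
rewrite /residue3 addrAC; split => [/dvdz_mod0P | eq_mod].
  by rewrite -eqz_mod_dvd => /eqP.
by apply/dvdz_mod0P; rewrite -eqz_mod_dvd; apply/eqP.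
Qed.

Theorem theorem3p2 (a b x : nat -> nat) (m : nat) :
  digits3 a -> digits3 b -> digits3 x ->
  a 0%N = 2%N -> b 0%N <> 0%N -> (0 < m)%N -> x 0%N <> 0%N ->
  (is_solution3 a b m x <->
   forall k : nat,
     (Lk a x k + Mk a b x m k = ck b m k %[mod 3])%Z).
Proof.
move=> _ _ _ _ _ _ _.
have residue3_digit k : 0 <= residue3 a b x m k < 3%:Z.
  by rewrite modz_ge0 // ltz_pmod.
have -> : is_solution3 a b m x
          <-> forall n, (3%:Z ^+ n %| \sum_(k < n) residue3 a b x m k * 3%:Z ^+ k)%Z.
  by split=> sol n; [rewrite -dvdz_cubic_residue3 | rewrite dvdz_cubic_residue3].
rewrite dvdz_digit_sum_eq0 //.
by split=> eq0 k; apply/residue3_eq0; apply: eq0.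
Qed.
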